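(* Consider the linear regression model $\boldsymbol{Y}=\boldsymbol{X}\boldsymbol{\beta}+\boldsymbol{\varepsilon}$, where $\boldsymbol{X}$ is a known $n\times p$ matrix with linearly independent columns ($n>p$) and $\boldsymbol{\varepsilon}\sim N(\boldsymbol{0},\sigma^2\boldsymbol{I}_n)$, $\sigma^2>0$ unknown. Let $\theta=\boldsymbol{a}^T\boldsymbol{\beta}$ ($\boldsymbol{a}\neq\boldsymbol{0}$ given), $\boldsymbol{\tau}=\boldsymbol{C}^T\boldsymbol{\beta}-\boldsymbol{t}$ with $\boldsymbol{C}$ a given $p\times s$ matrix ($s<p$) of linearly independent columns, $\boldsymbol{t}$ a given $s$-vector, and $\boldsymbol{a}$ not in the column span of $\boldsymbol{C}$. Let $\hat{\boldsymbol{\beta}}$ be the least squares estimator, $\hat\Sigma^2=\|\boldsymbol{Y}-\boldsymbol{X}\hat{\boldsymbol{\beta}}\|^2/(n-p)$, $\hat\Theta=\boldsymbol{a}^T\hat{\boldsymbol{\beta}}$, $\hat{\boldsymbol{\tau}}=\boldsymbol{C}^T\hat{\boldsymbol{\beta}}-\boldsymbol{t}$, and assume $E\big((\hat{\boldsymbol{\tau}}-\boldsymbol{\tau})(\hat\Theta-\theta)\big)=\boldsymbol{0}$. Let $v_{11}=\boldsymbol{a}^T(\boldsymbol{X}^T\boldsymbol{X})^{-1}\boldsymbol{a}$, $\boldsymbol{V}_{22}=\boldsymbol{C}^T(\boldsymbol{X}^T\boldsymbol{X})^{-1}\boldsymbol{C}$, $F=\big(\hat{\boldsymbol{\tau}}^T\boldsymbol{V}_{22}^{-1}\hat{\boldsymbol{\tau}}/s\big)/\hat\Sigma^2$,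 and for a function $d:[0,\infty)\to(0,\infty)$ let $J(d)=[\hat\Theta-\sqrt{v_{11}}\hat\Sigma d(\sqrt F),\ \hat\Theta+\sqrt{v_{11}}\hat\Sigma d(\sqrt F)]$. Suppose $d_1,d_2:[0,\infty)\to(0,\infty)$ satisfy $d_1(x)\ge d_2(x)$ for all $x\ge0$, and that there exist $\epsilon>0$ and an interval $[a,b]$ with $0\le a<b$ such that $d_1(x)>d_2(x)+\epsilon$ for all $x\in[a,b]$. Then $E(\text{length of }J(d_1))>E(\text{length of }J(d_2))$ for all values of $\|\boldsymbol{\gamma}\|$, where $\boldsymbol{\gamma}=(1/\sigma)\boldsymbol{V}_{22}^{-1/2}\boldsymbol{\tau}$.
   Context: $\|\boldsymbol{\gamma}\|=\sqrt{\boldsymbol{\gamma}^T\boldsymbol{\gamma}}$; the claim holds for all parameter values $(\boldsymbol{\beta},\sigma^2)$. *)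

From HB Require Import structures.
From mathcomp Require Import all_boot all_order all_algebra.
From mathcomp Require Import all_classical all_reals all_analysis.
Set Implicit Arguments. Unset Strict Implicit. Unset Printing Implicit Defensive.
Import Order.TTheory GRing.Theory Num.Theory.
Local Open Scope classical_set_scope.
Local Open Scope ring_scope.

Section Regression.
Context {R : realType}.

Definition sqnorm {m : nat} (v : 'cV[R]_m) : R := (v^T *m v) 0 0.

Definition lse {n p : nat} (X : 'M[R]_(n, p)) (Y : 'cV[R]_n) : 'cV[R]_p :=
  invmx (X^T *m X) *m X^T *m Y.

Definition Sigma_hat {n p : nat} (X : 'M[R]_(n, p)) (Y : 'cV[R]_n) : R :=
  Num.sqrt (sqnorm (Y - X *m lse X Y) / (n - p)%:R).

Definition Theta_hat {n p : nat} (X : 'M[R]_(n, p)) (a : 'cV[R]_p)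
  (Y : 'cV[R]_n) : R := (a^T *m lse X Y) 0 0.

Definition tau_hat {n p s : nat} (X : 'M[R]_(n, p)) (C : 'M[R]_(p, s))
  (t : 'cV[R]_s) (Y : 'cV[R]_n) : 'cV[R]_s := C^T *m lse X Y - t.

Definition v11 {n p : nat} (X : 'M[R]_(n, p)) (a : 'cV[R]_p) : R :=
  (a^T *m invmx (X^T *m X) *m a) 0 0.

Definition V22 {n p s : nat} (X : 'M[R]_(n, p)) (C : 'M[R]_(p, s)) : 'M[R]_s :=
  C^T *m invmx (X^T *m X) *m C.

Definition Fstat {n p s : nat} (X : 'M[R]_(n, p)) (C : 'M[R]_(p, s))
  (t : 'cV[R]_s) (Y : 'cV[R]_n) : R :=
  (((tau_hat X C t Y)^T *m invmx (V22 X C) *m tau_hat X C t Y) 0 0 / s%:R)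
    / (Sigma_hat X Y ^+ 2).

Definition lengthJ {n p s : nat} (X : 'M[R]_(n, p)) (a : 'cV[R]_p)
  (C : 'M[R]_(p, s)) (t : 'cV[R]_s) (d : R -> R) (Y : 'cV[R]_n) : R :=
  (Theta_hat X a Y + Num.sqrt (v11 X a) * Sigma_hat X Y * d (Num.sqrt (Fstat X C t Y)))
  - (Theta_hat X a Y - Num.sqrt (v11 X a) * Sigma_hat X Y * d (Num.sqrt (Fstat X C t Y))).

End Regression.

(* eps = (eps_0,...,eps_{n-1}) are i.i.d. N(0, sigma^2) on the probability space P:
   each eps_i is measurable with law normal_prob 0 sigma (sigma = standard
   deviation), and the family is mutually independent (product rule). *)
Definition iid_normal_noise {d : measure_display} {T : measurableType d}
  {R : realType} (P : probability T R) (n : nat) (sigma : R)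
  (eps : 'I_n -> T -> R) : Prop :=
  (forall i, measurable_fun setT (eps i)) /\
  (forall i (A : set R), measurable A ->
     P (eps i @^-1` A) = normal_prob 0 sigma A) /\
  (forall A : 'I_n -> set R, (forall i, measurable (A i)) ->
     P [set w | forall i, A i (eps i w)] = (\prod_(i < n) P (eps i @^-1` A i))%E).

Definition noise_vec {T : Type} {R : realType} {n : nat} (eps : 'I_n -> T -> R)
  (w : T) : 'cV[R]_n := \col_i eps i w.

From HB Require Import structures.
From mathcomp Require Import all_boot all_order all_algebra.
From mathcomp Require Import all_classical all_reals all_analysis.
From mathcomp Require Import ring lra measurable_realfun.
Set Implicit Arguments. Unset Strict Implicit. Unset Printing Implicit Defensive.
Import Order.TTheory GRing.Theory Num.Theory.
Import numFieldNormedType.Exports.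
Local Open Scope classical_set_scope.
Local Open Scope ring_scope.

(* The length of J(d) is 2 sqrt(v11) Sigma_hat d(sqrt F), so d1 >= d2 already
   gives the pointwise inequality of lengths; it remains to find an event of
   positive probability on which the difference is bounded away from 0.
   Because X has full column rank and n > p, some noise value makes
   Sigma_hat > 0 and sqrt F equal to the midpoint of [lo, hi]. Both statistics
   depend continuously on the noise where Sigma_hat <> 0, so they stay in the
   good range on a small ball of noise values, and that ball has positive
   probability since the Gaussian density is positive. *)

Section QuadraticForms.
Context {R : realType}.

Lemma sqnormE m (v : 'cV[R]_m) : sqnorm v = \sum_i v i 0 ^+ 2.
Proof. by rewrite /sqnorm mxE; apply: eq_bigr => i _; rewrite mxE expr2. Qed.

Lemma sqnorm_ge0 m (v : 'cV[R]_m) : 0 <= sqnorm v.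
Proof. by rewrite sqnormE sumr_ge0 // => i _; rewrite sqr_ge0. Qed.

Lemma sqnorm_eq0 m (v : 'cV[R]_m) : (sqnorm v == 0) = (v == 0).
Proof.
apply/idP/eqP => [|->]; last by rewrite sqnormE big1 // => i _; rewrite mxE expr0n.
rewrite sqnormE psumr_eq0 => [/allP v0|i _]; last exact: sqr_ge0.
apply/matrixP => i j; rewrite (ord1 j) mxE; apply/eqP.
by rewrite -sqrf_eq0; apply: v0; exact: mem_index_enum.
Qed.

Lemma sqnorm_gt0 m (v : 'cV[R]_m) : v != 0 -> 0 < sqnorm v.
Proof. by rewrite lt_def sqnorm_eq0 sqnorm_ge0 andbT. Qed.

Lemma sqnormZ m (c : R) (v : 'cV[R]_m) : sqnorm (c *: v) = c ^+ 2 * sqnorm v.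
Proof. by rewrite !sqnormE mulr_sumr; apply: eq_bigr => i _; rewrite mxE exprMn. Qed.

Lemma sqnorm_mulmx k m (A : 'M[R]_(k, m)) (v : 'cV[R]_m) :
  sqnorm (A *m v) = (v^T *m (A^T *m A) *m v) 0 0.
Proof. by rewrite /sqnorm trmx_mul !mulmxA. Qed.

Lemma mulmx_eq0_full_col_rank k m (A : 'M[R]_(k, m)) (v : 'cV[R]_m) :
  \rank A = m -> (A *m v == 0) = (v == 0).
Proof.
move=> rA; rewrite -trmx_eq0 trmx_mul mulmx_free_eq0 ?trmx_eq0 //.
by rewrite /row_free mxrank_tr rA.
Qed.

Lemma unitmx_ker0 k (A : 'M[R]_k) :
  (forall v : 'cV[R]_k, A *m v = 0 -> v = 0) -> A \in unitmx.
Proof.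
move=> A0; rewrite -unitmx_tr unitmxE unitfE; apply/negP => /det0P [v vn0 vA].
have /A0 /(congr1 trmx) : A *m v^T = 0 by rewrite -[LHS]trmxK trmx_mul trmxK vA trmx0.
by rewrite trmxK trmx0 => v0; rewrite v0 eqxx in vn0.
Qed.

Section Gram.
Variables (n p : nat) (X : 'M[R]_(n, p)).
Hypothesis rX : \rank X = p.

Lemma gram_unitmx : X^T *m X \in unitmx.
Proof.
apply: unitmx_ker0 => v /(congr1 (fun w => (v^T *m w) 0 0)).
rewrite mulmxA -sqnorm_mulmx mulmx0 mxE => /eqP.
by rewrite sqnorm_eq0 mulmx_eq0_full_col_rank // => /eqP.
Qed.

Lemma gram_inv_quadE (x : 'cV[R]_p) :
  (x^T *m invmx (X^T *m X) *m x) 0 0 = sqnorm (X *m (invmx (X^T *m X) *m x)).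
Proof.
rewrite sqnorm_mulmx trmx_mul trmx_inv trmx_mul trmxK -!mulmxA.
by rewrite (mulmxA X^T) (mulmxA (X^T *m X)) (mulmxV gram_unitmx) mul1mx.
Qed.

Lemma gram_inv_quad_gt0 (x : 'cV[R]_p) :
  x != 0 -> 0 < (x^T *m invmx (X^T *m X) *m x) 0 0.
Proof.
move=> xn0; rewrite gram_inv_quadE sqnorm_gt0 // mulmx_eq0_full_col_rank //.
by apply: contra xn0 => /eqP x0; rewrite -(mulKVmx gram_unitmx x) x0 mulmx0.
Qed.

Lemma exists_orthogonal_to_cols : (p < n)%N -> exists2 z : 'cV[R]_n, z != 0 & X^T *m z = 0.
Proof.
move=> pn; have : kermx X != 0 by rewrite -mxrank_eq0 mxrank_ker rX subn_eq0 -ltnNge.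
case/rowV0Pn => v /sub_kermxP vX vn0; exists v^T; first by rewrite trmx_eq0.
by rewrite -[LHS]trmxK trmx_mul !trmxK vX trmx0.
Qed.

Variables (s : nat) (C : 'M[R]_(p, s)).
Hypothesis rC : \rank C = s.

Lemma V22_trmx : (V22 X C)^T = V22 X C.
Proof. by rewrite /V22 !trmx_mul trmxK trmx_inv trmx_mul trmxK mulmxA. Qed.

Lemma V22_quad_gt0 (g : 'cV[R]_s) : g != 0 -> 0 < (g^T *m V22 X C *m g) 0 0.
Proof.
move=> gn0; have -> : g^T *m V22 X C *m g = (C *m g)^T *m invmx (X^T *m X) *m (C *m g).
  by rewrite /V22 trmx_mul !mulmxA.
by rewrite gram_inv_quad_gt0 // mulmx_eq0_full_col_rank.
Qed.

Lemma V22_unitmx : V22 X C \in unitmx.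
Proof.
apply: unitmx_ker0 => g Vg; apply/eqP/negPn/negP => /V22_quad_gt0.
by rewrite -mulmxA Vg mulmx0 mxE ltxx.
Qed.

End Gram.

Lemma exists_trmx_preimage p s (C : 'M[R]_(p, s)) (r : 'cV[R]_s) :
  \rank C = s -> exists u, C^T *m u = r.
Proof.
move=> rC; have /submxP [D rD] : (r^T <= C)%MS by rewrite submx_full // /row_full rC.
by exists D^T; rewrite -trmx_mul -rD trmxK.
Qed.

End QuadraticForms.

Section LeastSquares.
Context {R : realType} (n p s : nat) (X : 'M[R]_(n, p)) (C : 'M[R]_(p, s))
  (t : 'cV[R]_s).
Hypotheses (rX : \rank X = p) (rC : \rank C = s) (pn : (p < n)%N) (s0 : (0 < s)%N).

Lemma lse_orth_perturb (b : 'cV[R]_p) (z : 'cV[R]_n) :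
  X^T *m z = 0 -> lse X (X *m b + z) = b.
Proof.
move=> Xz; rewrite /lse -mulmxA mulmxDr Xz addr0 (mulmxA X^T).
by rewrite mulKmx // gram_unitmx.
Qed.

Lemma Sigma_hat_orth_perturb (b : 'cV[R]_p) (z : 'cV[R]_n) : X^T *m z = 0 ->
  Sigma_hat X (X *m b + z) = Num.sqrt (sqnorm z / (n - p)%:R).
Proof. by move=> Xz; rewrite /Sigma_hat lse_orth_perturb // addrC addKr. Qed.

Lemma exists_noise_sqrt_Fstat (beta : 'cV[R]_p) (m : R) : 0 < m ->
  exists e : 'cV[R]_n, 0 < Sigma_hat X (X *m beta + e) /\
    Num.sqrt (Fstat X C t (X *m beta + e)) = m.
Proof.
(* Choose the fitted part so that tau_hat = V22 g, which makes the numerator of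
   F equal to g^T V22 g, then scale a residual orthogonal to the columns of X
   to adjust Sigma_hat. *)
move=> m0.
pose g : 'cV[R]_s := const_mx 1.
have gn0 : g != 0.
  by apply/eqP => /matrixP /(_ (Ordinal s0) 0); rewrite !mxE => /eqP; rewrite oner_eq0.
pose q := (g^T *m V22 X C *m g) 0 0.
have q0 : 0 < q by exact: V22_quad_gt0.
have [u Cu] := exists_trmx_preimage (V22 X C *m g + t - C^T *m beta) rC.
have [z z0 Xz] := exists_orthogonal_to_cols rX pn.
pose w := sqnorm z / (n - p)%:R.
have w0 : 0 < w by rewrite divr_gt0 ?sqnorm_gt0 // ltr0n subn_gt0.
pose c2 := q / s%:R / (m ^+ 2 * w).
have c20 : 0 < c2 by rewrite !divr_gt0 ?ltr0n // mulr_gt0 // exprn_gt0.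
have Xcz : X^T *m (Num.sqrt c2 *: z) = 0 by rewrite -scalemxAr Xz scaler0.
have Sigma_hatE : Sigma_hat X (X *m (beta + u) + Num.sqrt c2 *: z) = Num.sqrt (c2 * w).
  by rewrite Sigma_hat_orth_perturb // sqnormZ (sqr_sqrtr (ltW c20)) mulrA.
have tau_hatE : tau_hat X C t (X *m (beta + u) + Num.sqrt c2 *: z) = V22 X C *m g.
  by rewrite /tau_hat lse_orth_perturb // mulmxDr Cu addrCA subrr addr0 addrK.
have quadE : ((V22 X C *m g)^T *m invmx (V22 X C) *m (V22 X C *m g)) 0 0 = q.
  rewrite trmx_mul V22_trmx -(mulmxA (g^T *m V22 X C)) (mulmxA (invmx _)).
  by rewrite (mulVmx (V22_unitmx rX rC)) mul1mx.
exists (X *m u + Num.sqrt c2 *: z); rewrite addrA -mulmxDr Sigma_hatE.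
split; first by rewrite sqrtr_gt0 mulr_gt0.
rewrite /Fstat Sigma_hatE tau_hatE quadE (sqr_sqrtr (ltW (mulr_gt0 c20 w0))).
rewrite (_ : _ / _ = m ^+ 2) ?sqrtr_sqr ?gtr0_norm // /c2.
by field; rewrite (gt_eqF w0) (gt_eqF m0) (gt_eqF q0) pnatr_eq0 -lt0n s0.
Qed.

End LeastSquares.

(* Continuity and measurability after composition with the noise are both
   instances, so the closure lemmas below serve both. *)
Definition fun_subalgebra {U : Type} {R : pzRingType} (P : (U -> R) -> Prop) :=
  [/\ forall c, P (fun=> c), forall f g, P f -> P g -> P (f \+ g)
    & forall f g, P f -> P g -> P (f \* g)].

Section Entrywise.
Context {U : Type} {R : pzRingType} (P : (U -> R) -> Prop).
Hypothesis hP : fun_subalgebra P.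

Definition entrywise m k (F : U -> 'M[R]_(m, k)) := forall i j, P (fun u => F u i j).

Lemma entrywise_cst m k (A : 'M[R]_(m, k)) : entrywise (fun=> A).
Proof. by case: hP => Pc _ _ i j; exact: Pc. Qed.

Lemma entrywise_add m k (F G : U -> 'M[R]_(m, k)) :
  entrywise F -> entrywise G -> entrywise (fun u => F u + G u).
Proof.
case: hP => _ PD _ hF hG i j.
have -> : (fun u => (F u + G u) i j) = (fun u => F u i j) \+ (fun u => G u i j).
  by apply/funext => u; rewrite mxE.
exact: PD.
Qed.

Lemma entrywise_mul m k l (F : U -> 'M[R]_(m, k)) (G : U -> 'M[R]_(k, l)) :
  entrywise F -> entrywise G -> entrywise (fun u => F u *m G u).
Proof.
case: hP => Pc PD PM hF hG i j.
have -> : (fun u => (F u *m G u) i j) = \sum_r ((fun u => F u i r) \* (fun u => G u r j)).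
  by rewrite fct_sumE; apply/funext => u; rewrite mxE.
by apply: big_ind => [|f g|r _]; [exact: (Pc 0) | exact: PD | exact: PM].
Qed.

Lemma entrywise_opp m k (F : U -> 'M[R]_(m, k)) :
  entrywise F -> entrywise (fun u => - F u).
Proof.
move=> hF; have -> : (fun u => - F u) = (fun u => (- 1%:M) *m F u).
  by apply/funext => u; rewrite mulNmx mul1mx.
exact/entrywise_mul/hF/entrywise_cst.
Qed.

Lemma entrywise_tr m k (F : U -> 'M[R]_(m, k)) :
  entrywise F -> entrywise (fun u => (F u)^T).
Proof.
move=> hF i j; have -> : (fun u => (F u)^T i j) = (fun u => F u j i).
  by apply/funext => u; rewrite mxE.
exact: hF.
Qed.

End Entrywise.

Lemma continuous_fun_subalgebra {R : realType} {U : topologicalType} :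
  fun_subalgebra (fun f : U -> R => continuous f).
Proof.
split=> [c | f g cf cg x | f g cf cg x]; first exact: cst_continuous.
- exact: (continuousD (cf x) (cg x)).
- exact: (continuousM (cf x) (cg x)).
Qed.

Lemma measurable_comp_fun_subalgebra {R : realType} {d} {T : measurableType d}
  {U : Type} (h : T -> U) :
  fun_subalgebra (fun f : U -> R => measurable_fun setT (f \o h)).
Proof.
split=> [c | f g mf mg | f g mf mg]; first exact: measurable_cst.
- exact: measurable_funD.
- exact: measurable_funM.
Qed.

Lemma measurable_inv {R : realType} : measurable_fun setT (@GRing.inv R).
Proof.
have -> : [set: R] = [set 0] `|` [set x | x != 0].
  by apply/seteqP; split => x //= _; case: (eqVneq x 0) => h; [left | right].
apply/measurable_funU => //.
  rewrite (_ : [set x : R | x != 0] = ~` [set 0]); first exact: measurableC.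
  by apply/seteqP; split => x /=; move/eqP.
split; first exact: measurable_fun_set1.
apply: open_continuous_measurable_fun; first exact: open_neq.
by move=> x; rewrite inE /= => xn0; exact: inv_continuous.
Qed.

Section NoiseStatistics.
Context {R : realType} (n p s : nat) (X : 'M[R]_(n, p)) (C : 'M[R]_(p, s))
  (t : 'cV[R]_s) (beta : 'cV[R]_p).

Definition rss (e : 'cV[R]_n) :=
  sqnorm (X *m beta + e - X *m lse X (X *m beta + e)).

Definition tau_quad (e : 'cV[R]_n) :=
  let tau := tau_hat X C t (X *m beta + e) in (tau^T *m invmx (V22 X C) *m tau) 0 0.

Section Closure.
Variable P : ('cV[R]_n -> R) -> Prop.
Hypotheses (hP : fun_subalgebra P) (P_coord : forall i, P (fun e => e i 0)).

Let entrywise_Y : entrywise P (fun e => X *m beta + e).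
Proof.
apply: entrywise_add => //; first exact: entrywise_cst.
by move=> i j; rewrite (ord1 j); exact: P_coord.
Qed.

Let entrywise_lse : entrywise P (fun e => lse X (X *m beta + e)).
Proof. exact: (entrywise_mul hP (entrywise_cst hP _) entrywise_Y). Qed.

Lemma rss_closed : P rss.
Proof.
have res := entrywise_add hP entrywise_Y
  (entrywise_opp hP (entrywise_mul hP (entrywise_cst hP X) entrywise_lse)).
exact (entrywise_mul hP (entrywise_tr res) res 0 0).
Qed.

Lemma tau_quad_closed : P tau_quad.
Proof.
have tau := entrywise_add hP (entrywise_mul hP (entrywise_cst hP C^T) entrywise_lse)
  (entrywise_opp hP (entrywise_cst hP t)).
exact (entrywise_mul hP (entrywise_mul hP (entrywise_tr tau)
  (entrywise_cst hP (invmx (V22 X C)))) tau 0 0).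
Qed.

End Closure.

Lemma continuous_Sigma_hat : continuous (fun e => Sigma_hat X (X *m beta + e)).
Proof.
rewrite (_ : (fun e => _) = Num.sqrt \o (rss \* cst (n - p)%:R^-1)) // => e.
have crss := rss_closed continuous_fun_subalgebra (fun i => @coord_continuous R n 1 i 0).
have ce := continuousM (crss e) (@cst_continuous _ _ ((n - p)%:R^-1 : R) e).
exact: continuous_comp ce (@sqrt_continuous R _).
Qed.

Lemma continuous_sqrt_Fstat e0 : Sigma_hat X (X *m beta + e0) != 0 ->
  {for e0, continuous (fun e => Num.sqrt (Fstat X C t (X *m beta + e)))}.
Proof.
move=> S0.
have cquad := tau_quad_closed continuous_fun_subalgebra (fun i => @coord_continuous R n 1 i 0).
have cS := @continuous_Sigma_hat e0.
have cS2 := @continuousV _ _ (_ \* _) e0 (mulf_neq0 S0 S0) (continuousM cS cS).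
have cq := continuousM (cquad e0) (@cst_continuous _ _ (s%:R^-1 : R) e0).
exact: continuous_comp (continuousM cq cS2) (@sqrt_continuous R _).
Qed.

Section Measurability.
Context {d : measure_display} {T : measurableType d} (eps : 'I_n -> T -> R).
Hypothesis meps : forall i, measurable_fun setT (eps i).

Let measurable_coord i : measurable_fun setT ((fun e : 'cV[R]_n => e i 0) \o noise_vec eps).
Proof. by rewrite (_ : _ \o _ = eps i) //; apply/funext => w; rewrite /= mxE. Qed.

Lemma measurable_Sigma_hat :
  measurable_fun setT (fun w => Sigma_hat X (X *m beta + noise_vec eps w)).
Proof.
apply: measurableT_comp (continuous_measurable_fun (@sqrt_continuous R)) _.
have mrss := rss_closed (measurable_comp_fun_subalgebra (noise_vec eps)) measurable_coord.
exact: (measurable_funM mrss (measurable_cst _)).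
Qed.

Lemma measurable_Fstat :
  measurable_fun setT (fun w => Fstat X C t (X *m beta + noise_vec eps w)).
Proof.
have mquad := tau_quad_closed (measurable_comp_fun_subalgebra (noise_vec eps)) measurable_coord.
apply: measurable_funM; first exact: (measurable_funM mquad (measurable_cst _)).
exact: measurableT_comp measurable_inv (measurable_funX 2 measurable_Sigma_hat).
Qed.

End Measurability.
End NoiseStatistics.

Section NoiseBall.
Context {R : realType} (n p s : nat) (X : 'M[R]_(n, p)) (C : 'M[R]_(p, s))
  (t : 'cV[R]_s) (beta : 'cV[R]_p).
Hypotheses (rX : \rank X = p) (rC : \rank C = s) (pn : (p < n)%N) (s0 : (0 < s)%N).

Lemma exists_noise_ball (lo hi : R) : 0 <= lo -> lo < hi ->
  exists y : 'cV[R]_n, exists2 r : R, 0 < r & exists2 dl : R, 0 < dl &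
    forall e, ball y r e -> dl < Sigma_hat X (X *m beta + e) /\
      lo <= Num.sqrt (Fstat X C t (X *m beta + e)) <= hi.
Proof.
move=> lo0 lohi; have m0 : 0 < (lo + hi) / 2 by lra.
have [y [Sy Fy]] := exists_noise_sqrt_Fstat t rX rC pn s0 beta m0.
have cS := @continuous_Sigma_hat _ _ _ X beta y.
have cF := continuous_sqrt_Fstat (C := C) (t := t) (lt0r_neq0 Sy).
have Sgt := cvgr_gt _ cS (Sigma_hat X (X *m beta + y) / 2) ltac:(lra).
have Fgt := cvgr_gt _ cF lo ltac:(rewrite Fy; lra).
have Flt := cvgr_lt _ cF hi ltac:(rewrite Fy; lra).
have [r r0 ry] := (nbhs_ballP y _).1 (filterI Sgt (filterI Fgt Flt)).
exists y, r => //; exists (Sigma_hat X (X *m beta + y) / 2); first by lra.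
by move=> e /ry [-> [/ltW -> /ltW ->]].
Qed.

End NoiseBall.

Lemma normal_prob_itv_gt0 {R : realType} (m sigma a b : R) : sigma != 0 -> a < b ->
  (0 < normal_prob m sigma `]a, b[)%E.
Proof.
move=> s0 ab.
pose K := `|a - m| + `|b - m|.
pose k := normal_peak sigma * expR (- K ^+ 2 / (sigma ^+ 2 *+ 2)).
have k0 : 0 < k by rewrite mulr_gt0 ?expR_gt0 ?normal_peak_gt0.
apply: (@lt_le_trans _ _ (\int[lebesgue_measure]_(y in `]a, b[) (cst k%:E y))%E).
  rewrite integral_cst //= lebesgue_measure_itv /= lte_fin ab -EFinB.
  by rewrite mule_gt0 // lte_fin subr_gt0.
apply: ge0_le_integral => //.
- by move=> y _; rewrite lee_fin ltW.
- by apply/measurable_EFinP/measurable_funTS; exact: measurable_normal_pdf.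
move=> y; rewrite /= in_itv /= => /andP [ay yb]; rewrite lee_fin normal_pdfE //.
rewrite ler_pM2l ?normal_peak_gt0 // /normal_fun ler_expR !mulNr lerN2.
have s2 : 0 < sigma ^+ 2 by rewrite exprn_even_gt0 //= s0 orbT.
rewrite ler_pM2r ?invr_gt0 ?mulrn_wgt0 //.
have := ler_norm (a - m); have := ler_norm (m - a).
have := ler_norm (b - m); have := ler_norm (m - b).
rewrite (distrC m a) (distrC m b) /K; nra.
Qed.

Section IidNormalNoise.
Context {R : realType} {d : measure_display} {T : measurableType d}
  (P : probability T R) (n : nat) (sigma : R) (eps : 'I_n -> T -> R).
Hypotheses (sigma0 : 0 < sigma) (heps : iid_normal_noise P sigma eps).

Let noise_ballE (y : 'cV[R]_n) (r : R) : 0 < r ->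
  [set w | ball y r (noise_vec eps w)] = [set w | forall i, ball (y i 0) r (eps i w)].
Proof.
move=> r0; apply/seteqP; split => w /=.
  by move=> [_ yw] i; have := yw i 0; rewrite mxE.
by move=> yw; split => // i j; rewrite (ord1 j) mxE; exact: yw.
Qed.

Lemma measurable_noise_ball (y : 'cV[R]_n) (r : R) : 0 < r ->
  measurable [set w | ball y r (noise_vec eps w)].
Proof.
case: heps => meps _ r0; rewrite noise_ballE //.
rewrite (_ : [set w | _] = \bigcap_(i in setT) (eps i @^-1` ball (y i 0) r)).
  apply: fin_bigcap_measurable finite_finset _ => i _.
  by rewrite -[X in measurable X]setTI; exact: meps measurableT _ (measurable_ball _ _).
by apply/seteqP; split => w /= yw i; [move=> _|]; exact: yw.
Qed.

Lemma noise_ball_prob_gt0 (y : 'cV[R]_n) (r : R) : 0 < r ->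
  (0 < P [set w | ball y r (noise_vec eps w)])%E.
Proof.
case: heps => _ [law indep] r0.
rewrite noise_ballE // (indep (fun i => ball (y i 0) r)) => [|i]; last first.
  exact: measurable_ball.
apply: (big_ind (fun x => 0 < x)%E) => [|x z|i _]; [exact: lte01 | exact: mule_gt0 |].
rewrite law; last exact: measurable_ball.
by rewrite ball_itv; apply: normal_prob_itv_gt0; [rewrite (gt_eqF sigma0) | lra].
Qed.

End IidNormalNoise.

Lemma lt_integral_gap {R : realType} {d : measure_display} {T : measurableType d}
  (mu : measure T R) (f g : T -> R) (B : set T) (k : R) :
  measurable_fun setT f -> measurable_fun setT g -> measurable B ->
  0 < k -> (0 < mu B)%E -> (forall w, 0 <= g w) -> (forall w, g w <= f w) ->
  (forall w, B w -> g w + k <= f w) -> (\int[mu]_w (g w)%:E < +oo)%E ->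
  (\int[mu]_w (g w)%:E < \int[mu]_w (f w)%:E)%E.
Proof.
move=> mf mg mB k0 muB g0 gf gapB gfin.
have mkB : measurable_fun setT (fun w => k * \1_B w).
  by apply: measurable_funM; [exact: measurable_cst | exact: measurable_indic].
have kB0 w : 0 <= k * \1_B w by rewrite mulr_ge0 ?(ltW k0) // indicE ler0n.
have intD : (\int[mu]_w (g w + k * \1_B w)%:E = \int[mu]_w (g w)%:E + k%:E * mu B)%E.
  under eq_integral do rewrite EFinD.
  rewrite ge0_integralD // => [|w _||w _|]; rewrite ?lee_fin //;
    try exact/measurable_EFinP.
  rewrite integralZl_indic //=; last by move=> /ltW; rewrite leNgt k0.
  by rewrite integral_indic // setIT.
apply: (@lt_le_trans _ _ (\int[mu]_w (g w + k * \1_B w)%:E)%E).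
  rewrite intD lteDl ?mule_gt0 ?lte_fin //.
  by rewrite ge0_fin_numE // integral_ge0 // => w _; rewrite lee_fin.
apply: ge0_le_integral => //.
- by move=> w _; rewrite lee_fin addr_ge0.
- by apply/measurable_EFinP; exact: measurable_funD.
- exact/measurable_EFinP.
move=> w _; rewrite lee_fin indicE.
by case: (boolP (w \in B)) => [/set_mem/gapB | _]; rewrite ?mulr1 ?mulr0 ?addr0.
Qed.

Section IntervalLength.
Context {R : realType} (n p s : nat) (X : 'M[R]_(n, p)) (a : 'cV[R]_p)
  (C : 'M[R]_(p, s)) (t : 'cV[R]_s).

Lemma lengthJE (d : R -> R) (Y : 'cV[R]_n) : lengthJ X a C t d Y =
  2 * (Num.sqrt (v11 X a) * Sigma_hat X Y * d (Num.sqrt (Fstat X C t Y))).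
Proof. by rewrite /lengthJ; ring. Qed.

Lemma measurable_lengthJ {dT : measure_display} {T : measurableType dT}
    (beta : 'cV[R]_p) (eps : 'I_n -> T -> R) (d : R -> R) :
  (forall i, measurable_fun setT (eps i)) -> measurable_fun `[(0 : R), +oo[ d ->
  measurable_fun setT (fun w => lengthJ X a C t d (X *m beta + noise_vec eps w)).
Proof.
move=> meps md; under eq_fun do rewrite lengthJE.
apply: measurable_funM; first exact: measurable_cst.
apply: measurable_funM.
  exact: measurable_funM (measurable_cst _) (measurable_Sigma_hat X beta meps).
apply: (measurable_comp (F := `[(0 : R), +oo[%classic)) => //.
- by move=> _ [w _ <-]; rewrite /= in_itv /= andbT sqrtr_ge0.
- exact: measurableT_comp (continuous_measurable_fun (@sqrt_continuous R))
    (measurable_Fstat X C t beta meps).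
Qed.

End IntervalLength.

Theorem theorem4 (R : realType) (n p s : nat)
  (X : 'M[R]_(n, p)) (a : 'cV[R]_p) (C : 'M[R]_(p, s)) (t : 'cV[R]_s)
  (d1 d2 : R -> R)
  (beta : 'cV[R]_p) (sigma : R)
  (dsp : measure_display) (T : measurableType dsp) (P : probability T R)
  (eps : 'I_n -> T -> R) :
  (p < n)%N -> (0 < s)%N -> (s < p)%N ->
  \rank X = p ->
  \rank C = s ->
  a != 0 ->
  ~ (exists w : 'cV[R]_s, a = C *m w) ->
  0 < sigma ->
  iid_normal_noise P sigma eps ->
  (* E((tauhat - tau)(Thetahat - theta)) = 0, componentwise *)
  (forall i : 'I_s,
     (\int[P]_w
        (((tau_hat X C t (X *m beta + noise_vec eps w) - (C^T *m beta - t)) i 0)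
         * (Theta_hat X a (X *m beta + noise_vec eps w) - (a^T *m beta) 0 0))%:E
      = 0)%E) ->
  (forall x, 0 <= x -> 0 < d1 x) ->
  (forall x, 0 <= x -> 0 < d2 x) ->
  measurable_fun (`[(0:R), +oo[%classic) d1 ->
  measurable_fun (`[(0:R), +oo[%classic) d2 ->
  (forall x, 0 <= x -> d2 x <= d1 x) ->
  (exists e : R, exists lo : R, exists hi : R,
     [/\ 0 < e, 0 <= lo, lo < hi &
         forall x, lo <= x <= hi -> d2 x + e < d1 x]) ->
  (\int[P]_w (lengthJ X a C t d2 (X *m beta + noise_vec eps w))%:E < +oo)%E ->
  (\int[P]_w (lengthJ X a C t d2 (X *m beta + noise_vec eps w))%:E
   < \int[P]_w (lengthJ X a C t d1 (X *m beta + noise_vec eps w))%:E)%E.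
Proof.
move=> pn s0 _ rX rC a0 _ sigma0 heps _ _ d2pos md1 md2 d21.
move=> [e [lo [hi [e0 lo0 lohi gap]]]] fin2.
have [y [r r0 [dl dl0 yr]]] := exists_noise_ball t beta rX rC pn s0 lo0 lohi.
have v0 : 0 < Num.sqrt (v11 X a) by rewrite sqrtr_gt0 gram_inv_quad_gt0.
apply: (lt_integral_gap (k := 2 * (Num.sqrt (v11 X a) * dl * e))
  (measurable_lengthJ X a C t beta heps.1 md1)
  (measurable_lengthJ X a C t beta heps.1 md2)
  (measurable_noise_ball heps y r0)) => //.
- by rewrite !mulr_gt0.
- exact (noise_ball_prob_gt0 sigma0 heps y r0).
- move=> w; rewrite lengthJE !mulr_ge0 ?sqrtr_ge0 // ltW // d2pos // sqrtr_ge0.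
- move=> w; rewrite !lengthJE ler_pM2l // ler_wpM2l ?d21 ?sqrtr_ge0 //.
  by rewrite mulr_ge0 ?sqrtr_ge0 ?ltW.
move=> w /yr [+ /gap]; rewrite !lengthJE.
set S := Sigma_hat _ _; set x := Num.sqrt (Fstat _ _ _ _) => Sdl d12.
have : dl * e <= S * (d1 x - d2 x) by apply: ler_pM; lra.
nra.
Qed.
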